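(* For every $n\ge1$ and every optimal $n$-town $S$, $$w(S)>\frac{h(S)}{2}-3\qquad\text{and}\qquad h(S)>\frac{w(S)}{2}-3.$$
   Context: An $n$-town is a set $S\subset\mathbb{Z}\times\mathbb{Z}$ of exactly $n$ distinct grid points; its cost is $c(S)=\frac12\sum_{s\in S}\sum_{t\in S}\|s-t\|_1$ (Manhattan distance), and it is optimal if its cost is minimum among all $n$-towns. For $i\in\mathbb{Z}$, the $i$-th column of $S$ is $C_i=\{(i,y)\in S\}$ and the $i$-th row is $R_i=\{(x,i)\in S\}$. The width of $S$ is $w(S)=\max_{i\in\mathbb{Z}}|R_i|$ and the height is $h(S)=\max_{i\in\mathbb{Z}}|C_i|$. *)

(* n-towns as duplicate-free lists of grid points in Z x Z. *)
From Stdlib Require Import ZArith List.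
Import ListNotations.
Open Scope Z_scope.

Definition point := (Z * Z)%type.

Definition l1 (s t : point) : Z := Z.abs (fst s - fst t) + Z.abs (snd s - snd t).

Definition is_town (n : nat) (S : list point) : Prop := NoDup S /\ length S = n.

Definition double_sum (S : list point) : Z :=
  fold_right Z.add 0 (map (fun s => fold_right Z.add 0 (map (fun t => l1 s t) S)) S).

(* c(S) = 1/2 * double sum (the double sum is always even, being symmetric with zero diagonal) *)
Definition cost (S : list point) : Z := double_sum S / 2.

Definition optimal (n : nat) (S : list point) : Prop :=
  is_town n S /\ forall T, is_town n T -> cost S <= cost T.

Definition col_size (S : list point) (i : Z) : nat :=
  length (filter (fun p => Z.eqb (fst p) i) S).
Definition row_size (S : list point) (i : Z) : nat :=
  length (filter (fun p => Z.eqb (snd p) i) S).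

(* w(S) = max_i |R_i|, h(S) = max_i |C_i|.  Only rows/columns meeting S can be
   nonempty, so the max over all i in Z equals the max over the rows/columns of points of S
   (with 0 for the empty town). *)
Definition width (S : list point) : nat :=
  fold_right Nat.max 0%nat (map (fun p => row_size S (snd p)) S).
Definition height (S : list point) : nat :=
  fold_right Nat.max 0%nat (map (fun p => col_size S (fst p)) S).

From Stdlib Require Import ZArith QArith List Lia Permutation.
Import ListNotations.
Open Scope Z_scope.

(* In an optimal town S the potential f(z) = sum_(t in S) |z - t|_1 is smaller at
   every point of S than at every point outside S, since moving a point p of S
   to q changes the cost by f(q) - |q - p|_1 - f(p).  As f(x, y) = F(x) + G(y),
   the columns of S are nested according to F and its rows according to G.

   Let column a be a tallest column, spanning [yB, yT], and let b minimise G on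
   that span.  Nothing of S lies above yT (it would make a column taller than
   column a), and between b and yT every column is closed downwards.  Pairing y
   with b + yT + 1 - y then shows 2 (G(yT) - G(b)) >= N (yT - b - 1), where
   N = |S|.  Row b has a gap (a + e, b) with 2|e| <= w + 1, and (a, yT) in S
   gives G(yT) - G(b) < F(a + e) - F(a) <= N |e|.  Hence yT - b <= w + 1,
   likewise b - yB <= w + 1 by reflection, so h <= 2w + 3; transposing swaps w and h. *)

Definition sumZ : list Z -> Z := fold_right Z.add 0.

Lemma sumZ_app l m : sumZ (l ++ m) = sumZ l + sumZ m.
Proof. induction l as [|x l IH]; unfold sumZ in *; simpl; lia. Qed.

Lemma sumZ_perm l l' : Permutation l l' -> sumZ l = sumZ l'.
Proof. induction 1; unfold sumZ in *; simpl; lia. Qed.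

Section MapSums.
Context {A : Type}.
Implicit Types (g h : A -> Z) (l m : list A).

Lemma sumZ_map_ext g h l : (forall t, In t l -> g t = h t) -> sumZ (map g l) = sumZ (map h l).
Proof. intros E. f_equal. now apply map_ext_in. Qed.

Lemma sumZ_map_le g h l : (forall t, In t l -> g t <= h t) -> sumZ (map g l) <= sumZ (map h l).
Proof.
  induction l as [|x l IH]; intros Hle; unfold sumZ in *; simpl; [lia|].
  specialize (IH (fun t Ht => Hle t (or_intror Ht))). specialize (Hle x (or_introl eq_refl)). lia.
Qed.

Lemma sumZ_map_add g h l : sumZ (map (fun t => g t + h t) l) = sumZ (map g l) + sumZ (map h l).
Proof. induction l as [|x l IH]; unfold sumZ in *; simpl; lia. Qed.

Lemma sumZ_map_scale (c : Z) g l : sumZ (map (fun t => c * g t) l) = c * sumZ (map g l).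
Proof. induction l as [|x l IH]; unfold sumZ in *; simpl; lia. Qed.

Lemma sumZ_map_opp g l : sumZ (map (fun t => - g t) l) = - sumZ (map g l).
Proof. induction l as [|x l IH]; unfold sumZ in *; simpl; lia. Qed.

Lemma sumZ_map_const (c : Z) l : sumZ (map (fun _ => c) l) = c * Z.of_nat (length l).
Proof. induction l as [|x l IH]; unfold sumZ in *; simpl; lia. Qed.

Lemma sumZ_map_filter (P : A -> bool) g l :
  sumZ (map g l) = sumZ (map g (filter P l)) + sumZ (map g (filter (fun t => negb (P t)) l)).
Proof. induction l as [|x l IH]; simpl; [reflexivity|]. destruct (P x); unfold sumZ in *; simpl; lia. Qed.

Lemma sumZ_map_incl g l m :
  NoDup l -> incl l m -> (forall t, In t m -> 0 <= g t) -> sumZ (map g l) <= sumZ (map g m).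
Proof.
  revert m; induction l as [|x l IH]; intros m Hnd Hincl Hpos.
  - apply (sumZ_map_le (fun _ => 0)) in Hpos. rewrite sumZ_map_const in Hpos. simpl; lia.
  - apply NoDup_cons_iff in Hnd as [Hx Hnd].
    destruct (in_split x m (Hincl x (or_introl eq_refl))) as (m1 & m2 & ->).
    assert (IHm : sumZ (map g l) <= sumZ (map g (m1 ++ m2))).
    { apply IH; [exact Hnd| |].
      - intros y Hy. specialize (Hincl y (or_intror Hy)).
        apply in_app_or in Hincl as [H|[<-|H]]; apply in_or_app; tauto.
      - intros y Hy. apply Hpos. apply in_app_or in Hy. apply in_or_app; simpl; tauto. }
    rewrite map_app, sumZ_app in *. simpl. unfold sumZ in *; simpl. lia.
Qed.

Lemma sumZ_nonpos_of_pairing g (psi : A -> A) l :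
  NoDup l ->
  (forall t, In t l -> 0 < g t -> In (psi t) l /\ g (psi t) = - g t) ->
  (forall t u, psi t = psi u -> t = u) ->
  sumZ (map g l) <= 0.
Proof.
  intros Hnd Hpair Hinj.
  rewrite (sumZ_map_filter (fun t => 0 <? g t)).
  set (pos := filter (fun t => 0 <? g t) l).
  set (rest := filter (fun t => negb (0 <? g t)) l).
  assert (Hpos : forall t, In t pos -> In t l /\ 0 < g t).
  { intros t Ht. apply filter_In in Ht as [Ht Hg]. split; [exact Ht|]. now apply Z.ltb_lt. }
  assert (Hmirror : sumZ (map g pos) = - sumZ (map g (map psi pos))).
  { rewrite map_map, <- sumZ_map_opp. apply sumZ_map_ext.
    intros t Ht. destruct (Hpos t Ht) as [Hl Hg]. rewrite (proj2 (Hpair t Hl Hg)). lia. }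
  assert (Hrest : sumZ (map (fun t => - g t) (map psi pos)) <= sumZ (map (fun t => - g t) rest)).
  { apply sumZ_map_incl.
    - apply NoDup_map_NoDup_ForallPairs; [intros t u _ _; apply Hinj|]. now apply NoDup_filter.
    - intros u Hu. apply in_map_iff in Hu as (t & <- & Ht). destruct (Hpos t Ht) as [Hl Hg].
      destruct (Hpair t Hl Hg) as [Hin Hneg]. apply filter_In. split; [exact Hin|].
      apply Bool.negb_true_iff, Z.ltb_ge. lia.
    - intros t Ht. apply filter_In in Ht as [_ Hg]. apply Bool.negb_true_iff, Z.ltb_ge in Hg. lia. }
  rewrite !sumZ_map_opp in Hrest. lia.
Qed.

End MapSums.

Lemma exists_argmin {A} (g : A -> Z) (l : list A) :
  l <> [] -> exists m, In m l /\ forall t, In t l -> g m <= g t.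
Proof.
  induction l as [|x l IH]; intros Hne; [congruence|].
  destruct l as [|y l].
  - exists x. split; [now left|]. intros t [<-|[]]; lia.
  - destruct IH as (m & Hm & Hmin); [discriminate|].
    destruct (Z.le_gt_cases (g x) (g m)).
    + exists x. split; [now left|]. intros t [<-|Ht]; [lia|]. specialize (Hmin t Ht); lia.
    + exists m. split; [now right|]. intros t [<-|Ht]; [lia|auto].
Qed.

Lemma le_list_max k l : In k l -> (k <= list_max l)%nat.
Proof.
  intros Hk. assert (Hall := proj1 (list_max_le l (list_max l)) (Nat.le_refl _)).
  rewrite Forall_forall in Hall. auto.
Qed.

Definition zseq (lo : Z) (k : nat) : list Z := map (fun i => lo + Z.of_nat i) (seq 0 k).

Lemma in_zseq lo k z : In z (zseq lo k) <-> lo <= z < lo + Z.of_nat k.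
Proof.
  unfold zseq. rewrite in_map_iff. split.
  - intros (i & <- & Hi). apply in_seq in Hi. lia.
  - intros Hz. exists (Z.to_nat (z - lo)). split; [lia|]. apply in_seq. lia.
Qed.

Lemma length_zseq lo k : length (zseq lo k) = k.
Proof. unfold zseq. now rewrite length_map, length_seq. Qed.

Lemma NoDup_zseq lo k : NoDup (zseq lo k).
Proof.
  apply NoDup_map_NoDup_ForallPairs; [|apply seq_NoDup]. intros i j _ _ E. lia.
Qed.

Lemma length_le_of_bounded (L : list Z) lo hi :
  NoDup L -> lo <= hi -> (forall z, In z L -> lo <= z <= hi) -> Z.of_nat (length L) <= hi - lo + 1.
Proof.
  intros Hnd Hlohi Hbd.
  assert (Hincl : incl L (zseq lo (Z.to_nat (hi - lo + 1)))).
  { intros z Hz. apply in_zseq. specialize (Hbd z Hz). lia. }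
  apply (NoDup_incl_length Hnd) in Hincl. rewrite length_zseq in Hincl. lia.
Qed.

Lemma exists_argmin_interval (g : Z -> Z) lo hi :
  lo <= hi -> exists b, lo <= b <= hi /\ forall y, lo <= y <= hi -> g b <= g y.
Proof.
  intros Hlohi. set (I := zseq lo (Z.to_nat (hi - lo + 1))).
  assert (HI : I <> []) by (intros E; assert (H : In lo I) by (apply in_zseq; lia); now rewrite E in H).
  destruct (exists_argmin g I HI) as (b & Hb & Hmin). apply in_zseq in Hb.
  exists b. split; [lia|]. intros y Hy. apply Hmin, in_zseq. lia.
Qed.

Lemma length_ge_of_interval (L : list Z) lo k :
  (forall z, lo <= z < lo + Z.of_nat k -> In z L) -> (k <= length L)%nat.
Proof.
  intros Hint. rewrite <- (length_zseq lo k). apply NoDup_incl_length; [apply NoDup_zseq|].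
  intros z Hz. apply Hint, in_zseq, Hz.
Qed.

Lemma exists_gap_above (L : list Z) (a : Z) :
  exists d, 0 <= d /\ ~ In (a + d) L /\ forall i, 0 <= i < d -> In (a + i) L.
Proof.
  remember (length L) as k eqn:Hk. revert L Hk a.
  induction k as [k IH] using lt_wf_ind. intros L -> a.
  destruct (in_dec Z.eq_dec a L) as [Ha|Ha].
  - destruct (IH _ (remove_length_lt Z.eq_dec L a Ha) _ eq_refl (a + 1)) as (d & Hd & Hout & Hin).
    exists (d + 1). repeat split; [lia| |].
    + intro H. apply Hout. replace (a + 1 + d) with (a + (d + 1)) by lia.
      apply in_in_remove; [lia|exact H].
    + intros i Hi. destruct (Z.eq_dec i 0) as [->|Hi0]; [now rewrite Z.add_0_r|].
      replace (a + i) with (a + 1 + (i - 1)) by lia.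
      exact (proj1 (in_remove Z.eq_dec L _ a (Hin (i - 1) ltac:(lia)))).
  - exists 0. rewrite Z.add_0_r. repeat split; [lia|exact Ha|lia].
Qed.

(* The maximal run of [L] through [a] has at most [length L] elements, so its
   shorter side ends within half of that. *)
Lemma exists_gap_near (L : list Z) (a : Z) :
  exists e, ~ In (a + e) L /\ 2 * Z.abs e <= Z.of_nat (length L) + 1.
Proof.
  destruct (exists_gap_above L a) as (d & Hd & Hout & Hin).
  destruct (exists_gap_above (map Z.opp L) (- a)) as (d' & Hd' & Hout' & Hin').
  assert (Hout'' : ~ In (a + - d') L).
  { intro H. apply Hout'. replace (- a + d') with (- (a + - d')) by lia. now apply in_map. }
  assert (Hrun : 1 <= d -> 1 <= d' -> (Z.to_nat (d + d' - 1) <= length L)%nat).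
  { intros Hd1 Hd'1. apply (length_ge_of_interval _ (a - d' + 1)). intros z Hz.
    destruct (Z.le_gt_cases a z).
    - replace z with (a + (z - a)) by lia. apply Hin. lia.
    - assert (Hm : In (- a + (a - z)) (map Z.opp L)) by (apply Hin'; lia).
      apply in_map_iff in Hm as (z' & Ez & Hz'). replace z with z' by lia. exact Hz'. }
  destruct (Z.le_gt_cases d d').
  - exists d. split; [exact Hout|lia].
  - exists (- d'). split; [exact Hout''|lia].
Qed.

Definition point_eq_dec (p q : point) : {p = q} + {p <> q}.
Proof. decide equality; apply Z.eq_dec. Defined.

Lemma l1_sym s t : l1 s t = l1 t s.
Proof. unfold l1; lia. Qed.

Lemma l1_pos s t : s <> t -> 0 < l1 s t.
Proof.
  destruct s as [x y], t as [x' y']. unfold l1; simpl. intros Hne.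
  destruct (Z.eq_dec x x'), (Z.eq_dec y y'); subst; [congruence|lia..].
Qed.

Definition pot (S : list point) (z : point) : Z := sumZ (map (l1 z) S).
Definition FX (S : list point) (x : Z) : Z := sumZ (map (fun t => Z.abs (x - fst t)) S).
Definition GY (S : list point) (y : Z) : Z := sumZ (map (fun t => Z.abs (y - snd t)) S).

Lemma pot_split S x y : pot S (x, y) = FX S x + GY S y.
Proof. apply sumZ_map_add. Qed.

Lemma pot_perm S S' z : Permutation S S' -> pot S z = pot S' z.
Proof. intros HP. apply sumZ_perm, Permutation_map, HP. Qed.

Lemma double_sum_pot S : double_sum S = sumZ (map (pot S) S).
Proof. reflexivity. Qed.

Lemma double_sum_perm S S' : Permutation S S' -> double_sum S = double_sum S'.
Proof.
  intros HP. rewrite !double_sum_pot, <- (sumZ_perm _ _ (Permutation_map (pot S') HP)).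
  apply sumZ_map_ext. intros z _. apply pot_perm, HP.
Qed.

Lemma double_sum_cons x L : double_sum (x :: L) = double_sum L + 2 * pot L x.
Proof.
  rewrite !double_sum_pot.
  assert (Hpot : forall s, pot (x :: L) s = l1 s x + pot L s) by reflexivity.
  cbn [map]. unfold sumZ at 1. cbn [fold_right]. fold sumZ.
  rewrite Hpot, (sumZ_map_ext (pot (x :: L)) (fun s => l1 s x + pot L s)) by auto.
  rewrite sumZ_map_add, (sumZ_map_ext (fun s => l1 s x) (l1 x)) by (intros; apply l1_sym).
  change (sumZ (map (l1 x) L)) with (pot L x). unfold l1 at 1. lia.
Qed.


Lemma FX_shift S x e : FX S (x + e) <= FX S x + Z.of_nat (length S) * Z.abs e.
Proof.
  unfold FX. rewrite Z.mul_comm, <- (sumZ_map_const (Z.abs e) S), <- sumZ_map_add.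
  apply sumZ_map_le. intros t _. lia.
Qed.

Lemma abs_convex lo m hi c : lo <= m <= hi ->
  (hi - lo) * Z.abs (m - c) <= (hi - m) * Z.abs (lo - c) + (m - lo) * Z.abs (hi - c).
Proof.
  intros Hm.
  destruct (Z.le_gt_cases c lo); [|destruct (Z.le_gt_cases c m); [|destruct (Z.le_gt_cases c hi)]].
  - rewrite !(Z.abs_eq (_ - c)) by lia. nia.
  - rewrite (Z.abs_neq (lo - c)), (Z.abs_eq (m - c)), (Z.abs_eq (hi - c)) by lia. nia.
  - rewrite (Z.abs_neq (lo - c)), (Z.abs_neq (m - c)), (Z.abs_eq (hi - c)) by lia. nia.
  - rewrite !(Z.abs_neq (_ - c)) by lia. nia.
Qed.

Lemma GY_convex S lo m hi : lo <= m <= hi ->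
  (hi - lo) * GY S m <= (hi - m) * GY S lo + (m - lo) * GY S hi.
Proof.
  intros Hm. unfold GY. rewrite <- !sumZ_map_scale, <- sumZ_map_add.
  apply sumZ_map_le. intros t _. now apply abs_convex.
Qed.

Definition count_above (S : list point) (b : Z) : Z :=
  sumZ (map (fun t => if b <? snd t then 1 else 0) S).

Lemma GY_succ S b : GY S (b + 1) = GY S b + Z.of_nat (length S) - 2 * count_above S b.
Proof.
  unfold GY, count_above.
  rewrite (sumZ_map_ext _ (fun t => Z.abs (b - snd t) + (1 + -2 * (if b <? snd t then 1 else 0)))).
  - rewrite sumZ_map_add, (sumZ_map_add (fun _ => 1)), sumZ_map_const, sumZ_map_scale. unfold point in *. lia.
  - intros t _. destruct (Z.ltb_spec b (snd t)); lia.
Qed.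

Definition col (S : list point) (x : Z) : list Z := map snd (filter (fun p => fst p =? x) S).
Definition row (S : list point) (y : Z) : list Z := map fst (filter (fun p => snd p =? y) S).

Lemma length_col S x : length (col S x) = col_size S x.
Proof. apply length_map. Qed.

Lemma length_row S y : length (row S y) = row_size S y.
Proof. apply length_map. Qed.

Lemma in_col S x y : In y (col S x) <-> In (x, y) S.
Proof.
  unfold col. rewrite in_map_iff. split.
  - intros ([x' y'] & <- & H). apply filter_In in H as [H E]. apply Z.eqb_eq in E. now subst.
  - intros H. exists (x, y). split; [reflexivity|]. apply filter_In. split; [exact H|apply Z.eqb_refl].
Qed.

Lemma in_row S x y : In x (row S y) <-> In (x, y) S.
Proof.
  unfold row. rewrite in_map_iff. split.
  - intros ([x' y'] & <- & H). apply filter_In in H as [H E]. apply Z.eqb_eq in E. now subst.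
  - intros H. exists (x, y). split; [reflexivity|]. apply filter_In. split; [exact H|apply Z.eqb_refl].
Qed.

Lemma NoDup_col S x : NoDup S -> NoDup (col S x).
Proof.
  intros Hnd. apply NoDup_map_NoDup_ForallPairs; [|now apply NoDup_filter].
  intros [x1 y1] [x2 y2] H1 H2 E. apply filter_In in H1 as [_ H1], H2 as [_ H2].
  apply Z.eqb_eq in H1, H2. simpl in *. now subst.
Qed.

Lemma col_size_le_height S x : (col_size S x <= height S)%nat.
Proof.
  rewrite <- length_col. destruct (col S x) as [|y ys] eqn:E; [simpl; lia|].
  assert (Hxy : In (x, y) S) by (apply in_col; rewrite E; now left).
  rewrite <- E, length_col. apply le_list_max, (in_map (fun p => col_size S (fst p)) _ _ Hxy).
Qed.

Lemma row_size_le_width S y : (row_size S y <= width S)%nat.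
Proof.
  rewrite <- length_row. destruct (row S y) as [|x xs] eqn:E; [simpl; lia|].
  assert (Hxy : In (x, y) S) by (apply in_row; rewrite E; now left).
  rewrite <- E, length_row. apply le_list_max, (in_map (fun p => row_size S (snd p)) _ _ Hxy).
Qed.

Lemma exists_tallest_col S : S <> [] ->
  exists a yB yT, col_size S a = height S /\ In (a, yB) S /\ In (a, yT) S /\
    forall y, In (a, y) S -> yB <= y <= yT.
Proof.
  intros Hne. destruct (exists_argmin (fun p => - Z.of_nat (col_size S (fst p))) S Hne)
    as ([a y] & Hay & Hmax).
  assert (Hcol : col S a <> []) by (intros E; apply in_col in Hay; now rewrite E in Hay).
  destruct (exists_argmin Z.opp _ Hcol) as (yT & HyT & HTmax).
  destruct (exists_argmin id _ Hcol) as (yB & HyB & HBmin).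
  exists a, yB, yT. split; [|split; [now apply in_col|split; [now apply in_col|]]].
  - apply Nat.le_antisymm; [apply col_size_le_height|].
    apply list_max_le, Forall_forall. intros k Hk. apply in_map_iff in Hk as (t & <- & Ht).
    specialize (Hmax t Ht). simpl in Hmax. lia.
  - intros y' Hy'. apply in_col in Hy'. specialize (HTmax y' Hy'). specialize (HBmin y' Hy').
    unfold id in HBmin. lia.
Qed.

Lemma row_gap_near S a b : exists e, ~ In (a + e, b) S /\ 2 * Z.abs e <= Z.of_nat (width S) + 1.
Proof.
  destruct (exists_gap_near (row S b) a) as (e & Hout & He).
  exists e. split; [now rewrite <- in_row|].
  rewrite length_row in He. pose proof (row_size_le_width S b). lia.
Qed.

Section OptimalTown.
Variables (n : nat) (S : list point).
Hypothesis optimal_S : optimal n S.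

(* Moving [p] to [q] changes the cost by [pot S q - l1 q p - pot S p]. *)
Lemma pot_lt_of_in_notin p q : In p S -> ~ In q S -> pot S p < pot S q.
Proof.
  intros Hp Hq. destruct optimal_S as [[Hnd Hlen] Hmin].
  destruct (in_split p S Hp) as (L1 & L2 & HS).
  set (L := L1 ++ L2).
  assert (HP : Permutation S (p :: L)) by (rewrite HS; symmetry; apply Permutation_middle).
  assert (HT : is_town n (q :: L)).
  { split.
    - constructor.
      + intro HqL. apply Hq, (Permutation_in _ (Permutation_sym HP)). now right.
      + apply (Permutation_NoDup HP) in Hnd. now inversion Hnd.
    - rewrite <- Hlen, (Permutation_length HP). reflexivity. }
  specialize (Hmin _ HT). unfold cost in Hmin.
  rewrite (double_sum_perm _ _ HP), !double_sum_cons, !(Z.mul_comm 2), !Z_div_plus_full in Hmin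
    by discriminate.
  rewrite !(pot_perm S (p :: L) _ HP).
  change (pot (p :: L) p) with (l1 p p + pot L p). change (pot (p :: L) q) with (l1 q p + pot L q).
  assert (Hqp : q <> p) by (intros ->; contradiction).
  pose proof (l1_pos q p Hqp). unfold l1 at 1. lia.
Qed.

Lemma mem_of_pot_le p q : In p S -> pot S q <= pot S p -> In q S.
Proof.
  intros Hp Hle. destruct (in_dec point_eq_dec q S) as [Hq|Hq]; [exact Hq|].
  pose proof (pot_lt_of_in_notin p q Hp Hq). lia.
Qed.

Lemma mem_of_FX_le x x' y : In (x, y) S -> FX S x' <= FX S x -> In (x', y) S.
Proof. intros Hxy Hle. apply (mem_of_pot_le _ _ Hxy). rewrite !pot_split. lia. Qed.

Lemma mem_of_GY_le x y y' : In (x, y) S -> GY S y' <= GY S y -> In (x, y') S.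
Proof. intros Hxy Hle. apply (mem_of_pot_le _ _ Hxy). rewrite !pot_split. lia. Qed.

Section TallestColumn.
Variables (a yT b : Z).
Hypothesis tallest_a : col_size S a = height S.
Hypothesis top_in : In (a, yT) S.
Hypothesis top_max : forall y, In (a, y) S -> y <= yT.
Hypothesis b_le_top : b <= yT.
Hypothesis b_min : forall y, b <= y <= yT -> GY S b <= GY S y.

(* A point above [yT] would put column [a] strictly inside a taller column. *)
Lemma below_top x y : In (x, y) S -> y <= yT.
Proof.
  intros Hxy. destruct (Z.le_gt_cases y yT) as [|Hy]; [assumption|exfalso].
  assert (Hay : ~ In (a, y) S) by (intros H; specialize (top_max y H); lia).
  assert (HF : FX S x < FX S a).
  { pose proof (pot_lt_of_in_notin _ _ Hxy Hay) as H. rewrite !pot_split in H. lia. }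
  assert (Hincl : incl (y :: col S a) (col S x)).
  { intros y' [<-|Hy']; apply in_col; [exact Hxy|].
    apply in_col in Hy'. apply (mem_of_FX_le a); [exact Hy'|lia]. }
  assert (Hnd : NoDup (y :: col S a)).
  { constructor; [|apply NoDup_col, optimal_S].
    intros H. apply in_col, top_max in H. lia. }
  apply (NoDup_incl_length Hnd) in Hincl. simpl in Hincl. rewrite !length_col in Hincl.
  pose proof (col_size_le_height S x). lia.
Qed.

Lemma GY_mono_above_center y' y : b <= y' <= y -> y <= yT -> GY S y' <= GY S y.
Proof.
  intros Hy' Hy. destruct (Z.eq_dec y' b) as [->|Hne]; [apply b_min; lia|].
  pose proof (GY_convex S b y' y ltac:(lia)). pose proof (b_min y' ltac:(lia)). nia.
Qed.

Lemma col_down_closed x y y' : b <= y' <= y -> y <= yT -> In (x, y) S -> In (x, y') S.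
Proof. intros Hy' Hy Hxy. apply (mem_of_GY_le _ _ _ Hxy), GY_mono_above_center; assumption. Qed.

Definition excess (t : point) : Z := Z.max 0 (snd t - b).

Lemma GY_top : GY S yT = GY S b + Z.of_nat (length S) * (yT - b) - 2 * sumZ (map excess S).
Proof.
  unfold GY. rewrite (sumZ_map_ext _ (fun t => Z.abs (b - snd t) + ((yT - b) + -2 * excess t))).
  - rewrite sumZ_map_add, (sumZ_map_add (fun _ => yT - b)), sumZ_map_const, sumZ_map_scale.
    unfold point in *. lia.
  - intros [x y] Hxy. pose proof (below_top x y Hxy). unfold excess; cbn [snd]. lia.
Qed.

(* Reflecting a point [y] in the middle of [b+1 .. yT] stays in [S] by downward
   closedness, and exactly cancels the excess over the average [(yT - b + 1)/2]. *)
Lemma excess_le_average : 2 * sumZ (map excess S) <= (yT - b + 1) * count_above S b.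
Proof.
  set (W := fun t : point => if b <? snd t then 2 * (snd t - b) - (yT - b + 1) else 0).
  assert (HW : sumZ (map W S) <= 0).
  { apply (sumZ_nonpos_of_pairing W (fun t => (fst t, b + yT + 1 - snd t))).
    - apply optimal_S.
    - intros [x y] Hxy HWpos. pose proof (below_top x y Hxy).
      unfold W in *; cbn [fst snd] in *. destruct (Z.ltb_spec b y); [|lia]. split.
      + apply (col_down_closed x y); [lia|lia|exact Hxy].
      + destruct (Z.ltb_spec b (b + yT + 1 - y)); lia.
    - intros [x y] [x' y'] E. injection E. intros. f_equal; lia. }
  enough (E : sumZ (map W S) = 2 * sumZ (map excess S) - (yT - b + 1) * count_above S b) by lia.
  unfold count_above.
  rewrite (sumZ_map_ext W (fun t => 2 * excess t + - ((yT - b + 1) * (if b <? snd t then 1 else 0)))).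
  - rewrite sumZ_map_add, sumZ_map_opp, !sumZ_map_scale. unfold point in *. lia.
  - intros t _. unfold W, excess. destruct (Z.ltb_spec b (snd t)); lia.
Qed.

Lemma count_above_half : b < yT -> 2 * count_above S b <= Z.of_nat (length S).
Proof. intros Hb. pose proof (GY_succ S b). pose proof (b_min (b + 1) ltac:(lia)). lia. Qed.

Lemma GY_rise_lower : Z.of_nat (length S) * (yT - b - 1) <= 2 * (GY S yT - GY S b).
Proof.
  destruct (Z.eq_dec b yT) as [->|Hne]; [lia|].
  rewrite GY_top. pose proof excess_le_average. pose proof (count_above_half ltac:(lia)). nia.
Qed.

Lemma top_near_center : yT - b <= Z.of_nat (width S) + 1.
Proof.
  destruct (row_gap_near S a b) as (e & Hout & He).
  pose proof (pot_lt_of_in_notin _ _ top_in Hout) as Hlt. rewrite !pot_split in Hlt.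
  pose proof (FX_shift S a e). pose proof GY_rise_lower.
  assert (HN : (0 < length S)%nat).
  { destruct (length S) eqn:E; [|lia]. apply length_zero_iff_nil in E. rewrite E in top_in. contradiction. }
  assert (yT - b - 1 < 2 * Z.abs e) by nia. lia.
Qed.

End TallestColumn.
End OptimalTown.

Lemma double_sum_map_isometry (phi : point -> point) T :
  (forall s t, l1 (phi s) (phi t) = l1 s t) -> double_sum (map phi T) = double_sum T.
Proof.
  intros Hiso. rewrite !double_sum_pot, map_map. apply sumZ_map_ext. intros s _.
  unfold pot. rewrite map_map. apply sumZ_map_ext. intros t _. apply Hiso.
Qed.

Lemma is_town_map_involution (phi : point -> point) n T :
  (forall z, phi (phi z) = z) -> is_town n T -> is_town n (map phi T).
Proof.
  intros Hinv [Hnd Hlen]. split; [|now rewrite length_map].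
  apply NoDup_map_NoDup_ForallPairs; [|exact Hnd]. intros s t _ _ E.
  now rewrite <- (Hinv s), <- (Hinv t), E.
Qed.

Lemma optimal_map_isometry (phi : point -> point) n S :
  (forall z, phi (phi z) = z) -> (forall s t, l1 (phi s) (phi t) = l1 s t) ->
  optimal n S -> optimal n (map phi S).
Proof.
  intros Hinv Hiso [HS Hmin]. split; [now apply is_town_map_involution|].
  intros T HT. unfold cost. rewrite double_sum_map_isometry by exact Hiso.
  specialize (Hmin _ (is_town_map_involution phi n T Hinv HT)). unfold cost in Hmin.
  now rewrite double_sum_map_isometry in Hmin.
Qed.

Lemma length_filter_map {A B} (P : B -> bool) (f : A -> B) l :
  length (filter P (map f l)) = length (filter (fun x => P (f x)) l).
Proof. induction l as [|x l IH]; simpl; [reflexivity|]. destruct (P (f x)); simpl; auto. Qed.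

Definition reflect_y (z : point) : point := (fst z, - snd z).
Definition transpose (z : point) : point := (snd z, fst z).

Lemma reflect_yK z : reflect_y (reflect_y z) = z.
Proof. destruct z; unfold reflect_y; simpl; f_equal; lia. Qed.

Lemma l1_reflect_y s t : l1 (reflect_y s) (reflect_y t) = l1 s t.
Proof. unfold l1, reflect_y; simpl; lia. Qed.

Lemma transposeK z : transpose (transpose z) = z.
Proof. now destruct z. Qed.

Lemma l1_transpose s t : l1 (transpose s) (transpose t) = l1 s t.
Proof. unfold l1, transpose; simpl; lia. Qed.

Lemma in_map_reflect_y S x y : In (x, y) (map reflect_y S) <-> In (x, - y) S.
Proof.
  rewrite <- (reflect_yK (x, y)) at 1. split.
  - intros H. apply in_map_iff in H as (z & Ez & Hz). apply (f_equal reflect_y) in Ez.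
    rewrite !reflect_yK in Ez. now subst.
  - apply in_map.
Qed.

Lemma col_size_reflect_y S x : col_size (map reflect_y S) x = col_size S x.
Proof. apply length_filter_map. Qed.

Lemma height_reflect_y S : height (map reflect_y S) = height S.
Proof.
  unfold height. rewrite map_map. f_equal. apply map_ext. intros z. apply col_size_reflect_y.
Qed.

Lemma width_reflect_y S : width (map reflect_y S) = width S.
Proof.
  unfold width, row_size. rewrite map_map. f_equal. apply map_ext. intros z.
  rewrite length_filter_map. f_equal. apply filter_ext. intros t. simpl.
  destruct (Z.eqb_spec (- snd t) (- snd z)), (Z.eqb_spec (snd t) (snd z)); lia.
Qed.

Lemma GY_reflect_y S y : GY (map reflect_y S) y = GY S (- y).
Proof. unfold GY. rewrite map_map. apply sumZ_map_ext. intros t _. simpl. lia. Qed.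

Lemma height_transpose S : height (map transpose S) = width S.
Proof.
  unfold height, width, col_size, row_size. rewrite map_map. f_equal. apply map_ext.
  intros z. apply length_filter_map.
Qed.

Lemma width_transpose S : width (map transpose S) = height S.
Proof.
  unfold height, width, col_size, row_size. rewrite map_map. f_equal. apply map_ext.
  intros z. apply length_filter_map.
Qed.

Lemma height_le_twice_width n S :
  (1 <= n)%nat -> optimal n S -> Z.of_nat (height S) <= 2 * Z.of_nat (width S) + 3.
Proof.
  intros Hn Hopt.
  assert (Hne : S <> []).
  { intros ->. destruct Hopt as [[_ Hlen] _]. simpl in Hlen. lia. }
  destruct (exists_tallest_col S Hne) as (a & yB & yT & Htall & HyB & HyT & Hspan).
  assert (HBT := Hspan yT HyT).
  destruct (exists_argmin_interval (GY S) yB yT ltac:(lia)) as (b & Hb & Hbmin).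
  assert (Hh : Z.of_nat (height S) <= yT - yB + 1).
  { rewrite <- Htall, <- length_col. apply length_le_of_bounded; [apply NoDup_col, Hopt|lia|].
    intros y Hy. apply Hspan, in_col, Hy. }
  assert (Htop : yT - b <= Z.of_nat (width S) + 1).
  { apply (top_near_center n S Hopt a); try assumption; [intros y Hy; now apply Hspan|lia|].
    intros y Hy. apply Hbmin. lia. }
  assert (Hopt' : optimal n (map reflect_y S))
    by (apply optimal_map_isometry; [exact reflect_yK|exact l1_reflect_y|exact Hopt]).
  assert (Hbot : - yB - - b <= Z.of_nat (width (map reflect_y S)) + 1).
  { apply (top_near_center n _ Hopt' a (- yB) (- b)).
    - now rewrite col_size_reflect_y, height_reflect_y.
    - apply in_map_reflect_y. now rewrite Z.opp_involutive.
    - intros y Hy. apply in_map_reflect_y, Hspan in Hy. lia.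
    - lia.
    - intros y Hy. rewrite !GY_reflect_y, Z.opp_involutive. apply Hbmin. lia. }
  rewrite width_reflect_y in Hbot. lia.
Qed.

Lemma half_minus_three_lt (h w : Z) : h <= 2 * w + 3 -> (inject_Z h / 2 - 3 < inject_Z w)%Q.
Proof. intros H. unfold Qlt, Qminus, Qdiv, inject_Z. simpl. lia. Qed.

Theorem lemma4 (n : nat) (S : list point) :
  (1 <= n)%nat -> optimal n S ->
  (inject_Z (Z.of_nat (height S)) / 2 - 3 < inject_Z (Z.of_nat (width S)))%Q /\
  (inject_Z (Z.of_nat (width S)) / 2 - 3 < inject_Z (Z.of_nat (height S)))%Q.
Proof.
  intros Hn Hopt. split; apply half_minus_three_lt.
  - exact (height_le_twice_width n S Hn Hopt).
  - rewrite <- height_transpose, <- (width_transpose S).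
    apply (height_le_twice_width n); [exact Hn|].
    apply optimal_map_isometry; [exact transposeK|exact l1_transpose|exact Hopt].
Qed.
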